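(* Let $n\ge 1$ and $\mathbb{T}=\mathbb{R}/2\pi\mathbb{Z}$. Let $G$ be the set of $2n\times 2n$ block matrices $$Q(A,B)=\begin{pmatrix} A & 0\\ B & (A^{T})^{-1}\end{pmatrix},$$ where $A\in \mathrm{GL}_n(\mathbb{Z})$ and $B$ is an $n\times n$ matrix with entries in $\mathbb{T}$ such that $A^{T}B$ is symmetric (as a $\mathbb{T}$-valued matrix), equipped with block matrix multiplication, i.e. $$Q(A_1,B_1)\,Q(A_2,B_2)=Q\big(A_1A_2,\; B_1A_2+(A_1^{T})^{-1}B_2\big),$$ with all entries of the lower-left block taken modulo $2\pi$. Then $G$ is a group; the subset $N=\{Q(I_n,C): C\in\mathbb{T}^{n\times n}\text{ symmetric}\}$ is a normal subgroup of $G$ isomorphic to $\mathrm{U}(1)^{n(n+1)/2}$; the subset $H=\{Q(A,0): A\in\mathrm{GL}_n(\mathbb{Z})\}$ is a subgroup isomorphic to $\mathrm{GL}_n(\mathbb{Z})$; every element of $G$ is a product of an element of $H$ and an element of $N$; and consequently $G\cong \mathrm{U}(1)^{n(n+1)/2}\rtimes \mathrm{GL}_n(\mathbb{Z})$.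
   Context: Products of an integer matrix with a $\mathbb{T}$-valued matrix (and sums of $\mathbb{T}$-valued matrices) are well defined modulo $2\pi$. The matrices $Q(A,B)$ are the ''rotor symplectic transformations'': they describe how $n$-rotor Clifford unitaries act by conjugation on rotor Pauli operators, where a Pauli string is represented by a vector $(\vec m\,|\,\vec\phi)\in\mathbb{Z}^n\times\mathbb{T}^n$ and the transformations must map such vectors to such vectors while preserving the symplectic form $(\vec m_u,\vec\phi_u),(\vec m_v,\vec\phi_v)\mapsto \vec m_u^{T}\vec\phi_v-\vec\phi_u^{T}\vec m_v \pmod{2\pi}$. $\mathrm{U}(1)^{n(n+1)/2}$ is identified with the additive group of symmetric $n\times n$ matrices over $\mathbb{T}$. *)

From HB Require Import structures.
From Stdlib Require Reals.
From mathcomp Require Import all_boot all_order all_algebra.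
From mathcomp Require Import Rstruct.

Set Implicit Arguments.
Unset Strict Implicit.
Unset Printing Implicit Defensive.

Import Order.TTheory GRing.Theory Num.Theory.
Local Open Scope ring_scope.
Notation R := Rdefinitions.R.

Definition tau : Rdefinitions.R := 2 * Rtrigo1.PI.

Lemma tau_gt0 : 0 < tau.
Proof.
rewrite /tau mulr_gt0 //.
by apply/RltP; exact: Rtrigo1.PI_RGT_0.
Qed.

Lemma tau_neq0 : tau != 0.
Proof. by rewrite gt_eqF // tau_gt0. Qed.

Definition red (x : Rdefinitions.R) : Rdefinitions.R := x - (Num.floor (x / tau))%:~R * tau.

Lemma red_itv x : 0 <= red x < tau.
Proof.
have ht := tau_gt0.
rewrite /red subr_ge0 ltrBlDr; apply/andP; split.
  by rewrite -ler_pdivlMr // floor_le.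
rewrite -[X in _ < X + _]mul1r -mulrDl -ltr_pdivrMr //.
have -> : (1 : R) = (1 : int)%:~R by [].
by rewrite addrC -intrD floorD1_gt.
Qed.

Lemma red_shift x (k : int) : red (x + k%:~R * tau) = red x.
Proof.
rewrite /red mulrDl mulfK ?tau_neq0 // floorDrz ?intr_int // intrD.
by rewrite (floorK (intr_int _ k)) mulrDl opprD addrACA subrr addr0.
Qed.

Lemma red_id x : 0 <= x < tau -> red x = x.
Proof.
move=> /andP[x0 xt]; rewrite /red.
suff -> : Num.floor (x / tau) = 0 by rewrite mul0r subr0.
apply/eqP; rewrite floor_eq add0r.
have -> : (0 : int)%:~R = 0 :> R by [].
have -> : (1 : int)%:~R = 1 :> R by [].
rewrite divr_ge0 ?(ltW tau_gt0) //=.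
by rewrite ltr_pdivrMr ?tau_gt0 // mul1r.
Qed.

Lemma redE x : exists k : int, red x = x + k%:~R * tau.
Proof. by exists (- Num.floor (x / tau)); rewrite /red mulrNz mulNr. Qed.

Lemma red_red x : red (red x) = red x.
Proof. by apply: red_id; exact: red_itv. Qed.

Lemma red_redD x y : red (red x + y) = red (x + y).
Proof. by have [k ->] := redE x; rewrite addrAC red_shift. Qed.

(** The type of angles modulo 2 pi, represented by reals in [0, 2 pi). *)
Definition torus := {x : Rdefinitions.R | 0 <= x < tau}.

HB.instance Definition _ := [Choice of torus by <:].

Definition tmk (x : Rdefinitions.R) : torus := exist _ (red x) (red_itv x).
Definition tzero : torus := tmk 0.
Definition tadd (a b : torus) : torus := tmk (val a + val b).
Definition topp (a : torus) : torus := tmk (- val a).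

Lemma tval_inj : injective (@proj1_sig Rdefinitions.R (fun x => 0 <= x < tau)).
Proof. exact: val_inj. Qed.

Lemma taddA : associative tadd.
Proof.
move=> a b c; apply: val_inj => /=.
rewrite red_redD addrC red_redD; congr red.
by rewrite addrC addrA.
Qed.

Lemma taddC : commutative tadd.
Proof. by move=> a b; apply: val_inj; rewrite /= addrC. Qed.

Lemma tadd0 : left_id tzero tadd.
Proof.
move=> a; apply: val_inj => /=.
by rewrite red_redD add0r red_id //; case: a.
Qed.

Lemma taddN : left_inverse tzero topp tadd.
Proof.
by move=> a; apply: val_inj => /=; rewrite red_redD addNr.
Qed.

HB.instance Definition _ := GRing.isZmodule.Build torus taddA taddC tadd0 taddN.

Notation T := torus.

Definition zmulmx m k p (A : 'M[int]_(m, k)) (B : 'M[T]_(k, p)) : 'M[T]_(m, p) :=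
  \matrix_(i, j) \sum_l (B l j) *~ (A i l).

Definition mulmxz m k p (B : 'M[T]_(m, k)) (A : 'M[int]_(k, p)) : 'M[T]_(m, p) :=
  \matrix_(i, j) \sum_l (B i l) *~ (A l j).

Definition symmx n (M : 'M[T]_n) : Prop := M^T = M.

(** * The group of rotor symplectic transformations.
    An element Q(A,B) is represented by the pair (A, B). *)

Definition Qelt n := ('M[int]_n * 'M[T]_n)%type.

Definition Q n (A : 'M[int]_n) (B : 'M[T]_n) : Qelt n := (A, B).

Definition inG n (x : Qelt n) : Prop :=
  x.1 \in unitmx /\ symmx (zmulmx x.1^T x.2).

Definition Qmul n (x y : Qelt n) : Qelt n :=
  Q (x.1 *m y.1) (mulmxz x.2 y.1 + zmulmx (invmx x.1^T) y.2).

Definition Qone n : Qelt n := Q 1%:M 0.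

Definition inN n (x : Qelt n) : Prop := x.1 = 1%:M /\ symmx x.2.

Definition inH n (x : Qelt n) : Prop := x.1 \in unitmx /\ x.2 = 0.

Definition subgroupG n (S : Qelt n -> Prop) : Prop :=
  [/\ forall x, S x -> inG x,
      S (Qone n),
      (forall x y, S x -> S y -> S (Qmul x y))
    & forall x, S x -> exists2 y, S y & Qmul x y = Qone n /\ Qmul y x = Qone n].

Definition normalG n (S : Qelt n -> Prop) : Prop :=
  subgroupG S /\
  forall g g' c, inG g -> inG g' -> Qmul g g' = Qone n -> Qmul g' g = Qone n ->
    S c -> S (Qmul (Qmul g c) g').

From HB Require Import structures.
From mathcomp Require Import all_boot all_order all_algebra.
From mathcomp Require Import Rstruct.
Import GRing.Theory Num.Theory.
Local Open Scope ring_scope.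
Set Implicit Arguments.
Unset Strict Implicit.

(** Writing [Q(A, B) = Q(A, C A)] with [C = B A^-1], membership in [G] says
    exactly that [C] is symmetric, and the product becomes
    [Q(A1, C1 A1) Q(A2, C2 A2) = Q(A1 A2, (C1 + A1^-T C2 A1^-1) A1 A2)].
    So [G] is the semidirect product of the symmetric [T]-matrices
    [C <-> Q(I, C)] by [GL_n(Z)] [A <-> Q(A, 0)], acting by the congruence
    [C |-> A^-T C A^-1]. All identities needed are associativity and
    transposition rules for the mixed products of integer matrices with
    [T]-valued matrices, which hold because [T] is a [Z]-module. *)

Section MixedProducts.
Variables m k l p : nat.

Lemma zmulmxA (A : 'M[int]_(m, k)) (A' : 'M[int]_(k, l)) (B : 'M[T]_(l, p)) :
  zmulmx (A *m A') B = zmulmx A (zmulmx A' B).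
Proof.
apply/matrixP=> i j; rewrite !mxE.
under eq_bigr => l0 _ do rewrite mxE mulrz_sumr.
rewrite exchange_big /=; apply: eq_bigr => k0 _.
rewrite mxE mulrz_suml; apply: eq_bigr => l0 _.
by rewrite [A i k0 * _]mulrC mulrzA.
Qed.

Lemma mulmxzA (B : 'M[T]_(m, k)) (A : 'M[int]_(k, l)) (A' : 'M[int]_(l, p)) :
  mulmxz B (A *m A') = mulmxz (mulmxz B A) A'.
Proof.
apply/matrixP=> i j; rewrite !mxE.
under eq_bigr => l0 _ do rewrite mxE mulrz_sumr.
rewrite exchange_big /=; apply: eq_bigr => k0 _.
rewrite mxE mulrz_suml; apply: eq_bigr => l0 _.
by rewrite mulrzA.
Qed.

Lemma zmulmxzA (A : 'M[int]_(m, k)) (B : 'M[T]_(k, l)) (A' : 'M[int]_(l, p)) :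
  zmulmx A (mulmxz B A') = mulmxz (zmulmx A B) A'.
Proof.
apply/matrixP=> i j; rewrite !mxE.
under eq_bigr => l0 _ do rewrite mxE mulrz_suml.
rewrite exchange_big /=; apply: eq_bigr => k0 _.
rewrite mxE mulrz_suml; apply: eq_bigr => l0 _.
by rewrite -!mulrzA mulrC.
Qed.

Lemma zmulmxDr (A : 'M[int]_(m, k)) (B B' : 'M[T]_(k, p)) :
  zmulmx A (B + B') = zmulmx A B + zmulmx A B'.
Proof.
apply/matrixP=> i j; rewrite !mxE -big_split /=; apply: eq_bigr => l0 _.
by rewrite mxE mulrzDl.
Qed.

Lemma mulmxzDl (A : 'M[int]_(k, p)) (B B' : 'M[T]_(m, k)) :
  mulmxz (B + B') A = mulmxz B A + mulmxz B' A.
Proof.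
apply/matrixP=> i j; rewrite !mxE -big_split /=; apply: eq_bigr => l0 _.
by rewrite mxE mulrzDl.
Qed.

Lemma zmulmx0 (A : 'M[int]_(m, k)) : zmulmx A (0 : 'M[T]_(k, p)) = 0.
Proof. by apply/matrixP=> i j; rewrite !mxE big1 // => l0 _; rewrite mxE mul0rz. Qed.

Lemma mul0mxz (A : 'M[int]_(k, p)) : mulmxz (0 : 'M[T]_(m, k)) A = 0.
Proof. by apply/matrixP=> i j; rewrite !mxE big1 // => l0 _; rewrite mxE mul0rz. Qed.

Lemma zmulmxN (A : 'M[int]_(m, k)) (B : 'M[T]_(k, p)) :
  zmulmx A (- B) = - zmulmx A B.
Proof. by apply/eqP; rewrite -subr_eq0 opprK -zmulmxDr addNr zmulmx0. Qed.

Lemma mulmxzN (A : 'M[int]_(k, p)) (B : 'M[T]_(m, k)) :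
  mulmxz (- B) A = - mulmxz B A.
Proof. by apply/eqP; rewrite -subr_eq0 opprK -mulmxzDl addNr mul0mxz. Qed.

Lemma trmx_zmulmx (A : 'M[int]_(m, k)) (B : 'M[T]_(k, p)) :
  (zmulmx A B)^T = mulmxz B^T A^T.
Proof. by apply/matrixP=> i j; rewrite !mxE; apply: eq_bigr => l0 _; rewrite !mxE. Qed.

Lemma trmx_mulmxz (A : 'M[int]_(k, p)) (B : 'M[T]_(m, k)) :
  (mulmxz B A)^T = zmulmx A^T B^T.
Proof. by apply/matrixP=> i j; rewrite !mxE; apply: eq_bigr => l0 _; rewrite !mxE. Qed.

End MixedProducts.

Lemma zmul1mx m p (B : 'M[T]_(m, p)) : zmulmx 1%:M B = B.
Proof.
apply/matrixP=> i j; rewrite !mxE (bigD1 i) //= big1 ?addr0.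
  by rewrite mxE eqxx mulr1z.
by move=> l0 /negbTE; rewrite mxE eq_sym => ->; rewrite mulr0z.
Qed.

Lemma mulmxz1 m p (B : 'M[T]_(m, p)) : mulmxz B 1%:M = B.
Proof.
apply/matrixP=> i j; rewrite !mxE (bigD1 j) //= big1 ?addr0.
  by rewrite mxE eqxx mulr1z.
by move=> l0 /negbTE; rewrite mxE => ->; rewrite mulr0z.
Qed.

Section Cancellation.
Variables (m p : nat) (A : 'M[int]_m).
Hypothesis uA : A \in unitmx.

Lemma zmulKmx : cancel (@zmulmx m m p A) (zmulmx (invmx A)).
Proof. by move=> B; rewrite -zmulmxA mulVmx // zmul1mx. Qed.

Lemma zmulKVmx : cancel (@zmulmx m m p (invmx A)) (zmulmx A).
Proof. by move=> B; rewrite -zmulmxA mulmxV // zmul1mx. Qed.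

Lemma mulmxzK :
  cancel (fun B : 'M[T]_(p, m) => mulmxz B A) (fun B => mulmxz B (invmx A)).
Proof. by move=> B; rewrite -mulmxzA mulmxV // mulmxz1. Qed.

Lemma mulmxzKV :
  cancel (fun B : 'M[T]_(p, m) => mulmxz B (invmx A)) (fun B => mulmxz B A).
Proof. by move=> B; rewrite -mulmxzA mulVmx // mulmxz1. Qed.

End Cancellation.

Lemma invmxM (R : comUnitRingType) n (A B : 'M[R]_n) :
  A \in unitmx -> B \in unitmx -> invmx (A *m B) = invmx B *m invmx A.
Proof.
move=> uA uB; have uAB : A *m B \in unitmx by rewrite unitmx_mul uA.
by rewrite -[RHS]mul1mx -(mulVmx uAB) -!mulmxA mulKVmx // mulmxV // mulmx1.
Qed.

Section Congruence.
Variable n : nat.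
Implicit Types (M N : 'M[int]_n) (S : 'M[T]_n).

Definition congrmx M S : 'M[T]_n := zmulmx M^T (mulmxz S M).

Lemma symmx0 : symmx (0 : 'M[T]_n).
Proof. by rewrite /symmx trmx0. Qed.

Lemma symmxD S S' : symmx S -> symmx S' -> symmx (S + S').
Proof. by rewrite /symmx raddfD /= => -> ->. Qed.

Lemma symmxN S : symmx S -> symmx (- S).
Proof. by rewrite /symmx raddfN /= => ->. Qed.

Lemma symmx_congr M S : symmx S -> symmx (congrmx M S).
Proof.
by rewrite /symmx /congrmx => sS; rewrite trmx_zmulmx trmx_mulmxz trmxK sS zmulmxzA.
Qed.

Lemma congrmx1 S : congrmx 1%:M S = S.
Proof. by rewrite /congrmx trmx1 zmul1mx mulmxz1. Qed.

Lemma congrmxM M N S : congrmx (M *m N) S = congrmx N (congrmx M S).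
Proof. by rewrite /congrmx trmx_mul zmulmxA mulmxzA zmulmxzA. Qed.

Lemma congrmxD M : {morph congrmx M : S S' / S + S'}.
Proof. by move=> S S'; rewrite /congrmx mulmxzDl zmulmxDr. Qed.

End Congruence.

Section RotorSymplectic.
Variable n : nat.
Implicit Types (x y z : Qelt n) (A : 'M[int]_n) (B C D : 'M[T]_n).

Definition gl_act A C := congrmx (invmx A) C.

Lemma symmx_gl_act A C : symmx C -> symmx (gl_act A C).
Proof. exact: symmx_congr. Qed.

Definition Qinv x : Qelt n :=
  Q (invmx x.1) (- zmulmx x.1^T (mulmxz x.2 (invmx x.1))).

Definition sdpQ (c : 'M[T]_n * 'M[int]_n) : Qelt n := Q c.2 (mulmxz c.1 c.2).

Lemma mulmxz_invmx_sym x : inG x -> symmx (mulmxz x.2 (invmx x.1)).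
Proof.
case: x => A B [/= uA sAB].
suff -> : mulmxz B (invmx A) = congrmx (invmx A) (zmulmx A^T B).
  exact: symmx_congr.
by rewrite /congrmx zmulmxzA trmx_inv zmulKmx ?unitmx_tr.
Qed.

Lemma inG_Qmul x y : inG x -> inG y -> inG (Qmul x y).
Proof.
(* [(A1 A2)^T (B1 A2 + A1^-T B2) = A2^T (A1^T B1) A2 + A2^T B2] *)
case: x y => [A1 B1] [A2 B2] [/= u1 s1] [/= u2 s2]; split => /=.
  by rewrite unitmx_mul u1.
rewrite trmx_mul zmulmxDr zmulmxzA zmulmxA zmulmxA zmulKVmx ?unitmx_tr //.
by apply: symmxD => //; rewrite -zmulmxzA; apply: symmx_congr.
Qed.

Lemma QmulA x y z : x.1 \in unitmx -> y.1 \in unitmx ->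
  Qmul x (Qmul y z) = Qmul (Qmul x y) z.
Proof.
case: x y z => [A1 B1] [A2 B2] [A3 B3] /= u1 u2; congr pair; first exact: mulmxA.
rewrite trmx_mul invmxM ?unitmx_tr // zmulmxDr mulmxzDl mulmxzA zmulmxzA.
by rewrite zmulmxA addrA.
Qed.

Lemma Qmul1x x : Qmul (Qone n) x = x.
Proof.
by case: x => A B; rewrite /Qmul /= mul1mx mul0mxz trmx1 invmx1 zmul1mx add0r.
Qed.

Lemma Qmulx1 x : Qmul x (Qone n) = x.
Proof. by case: x => A B; rewrite /Qmul /= mulmx1 mulmxz1 zmulmx0 addr0. Qed.

Lemma inG_Qone : inG (Qone n).
Proof. by split; [exact: unitmx1 | rewrite /= zmulmx0; exact: symmx0]. Qed.

Lemma inG_Qinv x : inG x -> inG (Qinv x).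
Proof.
move=> Gx; have [uA _] := Gx; split; first by rewrite unitmx_inv.
rewrite /= zmulmxN trmx_inv zmulKmx ?unitmx_tr //.
exact/symmxN/mulmxz_invmx_sym.
Qed.

Lemma QmulxV x : x.1 \in unitmx -> Qmul x (Qinv x) = Qone n.
Proof.
case: x => A B /= uA; rewrite /Qmul /= mulmxV //.
by rewrite zmulmxN zmulKmx ?unitmx_tr // subrr.
Qed.

Lemma QmulVx x : x.1 \in unitmx -> Qmul (Qinv x) x = Qone n.
Proof.
case: x => A B /= uA; rewrite /Qmul /= mulVmx //.
by rewrite mulmxzN -zmulmxzA mulmxzKV // -trmx_inv invmxK addNr.
Qed.

Lemma QmulI C D : Qmul (Q 1%:M C) (Q 1%:M D) = Q 1%:M (C + D).
Proof. by rewrite /Qmul /= mulmx1 mulmxz1 trmx1 invmx1 zmul1mx. Qed.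

Lemma Qmul0 A A' : Qmul (Q A 0) (Q A' 0) = Q (A *m A') 0.
Proof. by rewrite /Qmul /= mul0mxz zmulmx0 addr0. Qed.

Lemma Qmul_conj A B D : A \in unitmx ->
  Qmul (Q A B) (Q 1%:M D) = Qmul (Q 1%:M (gl_act A D)) (Q A B).
Proof.
move=> uA; rewrite /Qmul /= mul1mx mulmx1 mulmxz1 trmx1 invmx1 zmul1mx addrC.
by rewrite /gl_act /congrmx zmulmxzA mulmxzKV // trmx_inv.
Qed.

Lemma subgroup_inN : subgroupG (@inN n).
Proof.
split.
- by case=> A B [/= -> sB]; split; [exact: unitmx1 | rewrite /= trmx1 zmul1mx].
- by split => //; exact: symmx0.
- case=> A1 B1 [A2 B2] [/= -> s1] [/= -> s2].
  by rewrite QmulI; split => //; exact: symmxD.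
- case=> A B [/= -> sB]; exists (Q 1%:M (- B)); first by split => //; exact: symmxN.
  by rewrite !QmulI subrr addNr.
Qed.

Lemma normal_inN : normalG (@inN n).
Proof.
split; first exact: subgroup_inN.
case=> A B g' [C D] [/= uA _] _ gg' _ [/= -> sD].
(* [g c g' = Q(I, A^-T D A^-1) g g'] *)
rewrite Qmul_conj // -QmulA ?unitmx1 // gg' Qmulx1.
by split => //; exact: symmx_gl_act.
Qed.

Lemma subgroup_inH : subgroupG (@inH n).
Proof.
split.
- by case=> A B [/= uA ->]; split => //=; rewrite zmulmx0; exact: symmx0.
- by split => //=; exact: unitmx1.
- case=> A1 B1 [A2 B2] [/= u1 ->] [/= u2 ->].
  by rewrite Qmul0; split; rewrite //= unitmx_mul u1.
- case=> A B [/= uA ->]; exists (Q (invmx A) 0); first by split; rewrite ?unitmx_inv.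
  by rewrite !Qmul0 mulmxV ?mulVmx.
Qed.

Lemma inG_HN_decomp x : inG x -> x = Qmul (Q x.1 0) (Q 1%:M (zmulmx x.1^T x.2)).
Proof.
case: x => A B [/= uA _].
by rewrite /Qmul /= mulmx1 mul0mxz add0r zmulKmx ?unitmx_tr.
Qed.

Lemma gl_act1 C : gl_act 1%:M C = C.
Proof. by rewrite /gl_act invmx1 congrmx1. Qed.

Lemma gl_actM A1 A2 C : A1 \in unitmx -> A2 \in unitmx ->
  gl_act (A1 *m A2) C = gl_act A1 (gl_act A2 C).
Proof. by move=> u1 u2; rewrite /gl_act invmxM // congrmxM. Qed.

Lemma inG_sdpQ C A : symmx C -> A \in unitmx -> inG (sdpQ (C, A)).
Proof. by move=> sC uA; split => //=; exact: symmx_congr. Qed.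

Lemma sdpQ_inj C1 A1 C2 A2 : A1 \in unitmx ->
  sdpQ (C1, A1) = sdpQ (C2, A2) -> C1 = C2 /\ A1 = A2.
Proof. by move=> u1 [<- /(can_inj (mulmxzK u1))]. Qed.

Lemma inG_sdpQE x : inG x -> x = sdpQ (mulmxz x.2 (invmx x.1), x.1).
Proof. by case: x => A B [/= uA _]; rewrite /sdpQ /Q /= mulmxzKV. Qed.

Lemma sdpQM C1 A1 C2 A2 : A1 \in unitmx ->
  sdpQ (C1 + gl_act A1 C2, A1 *m A2) = Qmul (sdpQ (C1, A1)) (sdpQ (C2, A2)).
Proof.
move=> u1; rewrite /Qmul /sdpQ /= mulmxzDl mulmxzA; congr (Q _ (_ + _)).
by rewrite /gl_act /congrmx -zmulmxzA -mulmxzA mulmxA mulVmx // mul1mx trmx_inv.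
Qed.

End RotorSymplectic.

Ltac split_and := repeat match goal with |- _ /\ _ => split end.

Theorem theorem1 (n : nat) (hn : (0 < n)%N) :
  (* (1) G is a group under block matrix multiplication *)
  ((forall x y : Qelt n, inG x -> inG y -> inG (Qmul x y)) /\
   (forall x y z : Qelt n, inG x -> inG y -> inG z ->
      Qmul x (Qmul y z) = Qmul (Qmul x y) z) /\
   inG (Qone n) /\
   (forall x : Qelt n, inG x -> Qmul (Qone n) x = x /\ Qmul x (Qone n) = x) /\
   (forall x : Qelt n, inG x ->
      exists2 y, inG y & Qmul x y = Qone n /\ Qmul y x = Qone n)) /\
  (* (2) N is a normal subgroup of G, isomorphic to U(1)^(n(n+1)/2),
         i.e. to the additive group of symmetric T-valued n x n matrices *)
  (normalG (@inN n) /\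
   exists f : 'M[T]_n -> Qelt n,
     (forall C, symmx C -> inN (f C)) /\
     (forall C1 C2, symmx C1 -> symmx C2 -> f C1 = f C2 -> C1 = C2) /\
     (forall x, inN x -> exists2 C, symmx C & f C = x) /\
     (forall C1 C2, symmx C1 -> symmx C2 -> f (C1 + C2) = Qmul (f C1) (f C2))) /\
  (* (3) H is a subgroup of G isomorphic to GL_n(Z) *)
  (subgroupG (@inH n) /\
   exists f : 'M[int]_n -> Qelt n,
     (forall A, A \in unitmx -> inH (f A)) /\
     (forall A1 A2, A1 \in unitmx -> A2 \in unitmx -> f A1 = f A2 -> A1 = A2) /\
     (forall x, inH x -> exists2 A, A \in unitmx & f A = x) /\
     (forall A1 A2, A1 \in unitmx -> A2 \in unitmx ->
        f (A1 *m A2) = Qmul (f A1) (f A2))) /\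
  (* (4) every element of G is a product of an element of H and one of N *)
  (forall g : Qelt n, inG g ->
     exists h c, [/\ inH h, inN c & g = Qmul h c]) /\
  (* (5) G is isomorphic to a semidirect product U(1)^(n(n+1)/2) ⋊ GL_n(Z):
         an action of GL_n(Z) by additive automorphisms on symmetric
         T-matrices, and a group isomorphism from the semidirect product
         (C1, A1)(C2, A2) = (C1 + act A1 C2, A1 A2) onto G *)
  (exists (act : 'M[int]_n -> 'M[T]_n -> 'M[T]_n)
          (Psi : 'M[T]_n * 'M[int]_n -> Qelt n),
     (forall A C, A \in unitmx -> symmx C -> symmx (act A C)) /\
     (forall A C1 C2, A \in unitmx -> symmx C1 -> symmx C2 ->
        act A (C1 + C2) = act A C1 + act A C2) /\
     (forall C, symmx C -> act 1%:M C = C) /\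
     (forall A1 A2 C, A1 \in unitmx -> A2 \in unitmx -> symmx C ->
        act (A1 *m A2) C = act A1 (act A2 C)) /\
     (forall C A, symmx C -> A \in unitmx -> inG (Psi (C, A))) /\
     (forall C1 A1 C2 A2, symmx C1 -> A1 \in unitmx -> symmx C2 -> A2 \in unitmx ->
        Psi (C1, A1) = Psi (C2, A2) -> C1 = C2 /\ A1 = A2) /\
     (forall g, inG g -> exists C A, [/\ symmx C, A \in unitmx & Psi (C, A) = g]) /\
     (forall C1 A1 C2 A2, symmx C1 -> A1 \in unitmx -> symmx C2 -> A2 \in unitmx ->
        Psi (C1 + act A1 C2, A1 *m A2) = Qmul (Psi (C1, A1)) (Psi (C2, A2)))).
Proof.
split; [|split; [|split; [|split]]].
- split_and; [exact: inG_Qmul | | exact: inG_Qone | |].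
  + by move=> x y z [ux _] [uy _] _; exact: QmulA.
  + by move=> x _; rewrite Qmul1x Qmulx1.
  + by move=> x [ux sx]; exists (Qinv x); rewrite ?QmulxV ?QmulVx //; exact: inG_Qinv.
- split; first exact: normal_inN.
  exists (Q 1%:M); split_and.
  + by move=> C sC; split.
  + by move=> C1 C2 _ _ [].
  + by case=> A B [/= -> sB]; exists B.
  + by move=> C1 C2 _ _; rewrite QmulI.
- split; first exact: subgroup_inH.
  exists (fun A => Q A 0); split_and.
  + by move=> A uA; split.
  + by move=> A1 A2 _ _ [].
  + by case=> A B [/= uA ->]; exists A.
  + by move=> A1 A2 _ _; rewrite Qmul0.
- move=> g Gg; exists (Q g.1 0), (Q 1%:M (zmulmx g.1^T g.2)).
  by have [uA sB] := Gg; split; rewrite // -inG_HN_decomp.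
- exists (@gl_act n), (@sdpQ n); split_and.
  + by move=> A C _; exact: symmx_gl_act.
  + by move=> A C1 C2 _ _ _; exact: congrmxD.
  + by move=> C _; exact: gl_act1.
  + by move=> A1 A2 C u1 u2 _; exact: gl_actM.
  + by move=> C A; exact: inG_sdpQ.
  + by move=> C1 A1 C2 A2 _ u1 _ _; exact: sdpQ_inj.
  + move=> g Gg; exists (mulmxz g.2 (invmx g.1)), g.1.
    by rewrite -inG_sdpQE //; split; [exact: mulmxz_invmx_sym | case: Gg |].
  + by move=> C1 A1 C2 A2 _ u1 _ _; exact: sdpQM.
Qed.
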